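(* Let $c = 1.40759\ldots$ denote the largest real root of $x^6 - 2x^2 - 2x - 1 = 0$ (note $c < \sqrt{2}$). For all integers $n \ge 1$ and $t$ with $0 \le t \le n/2$, every triangle-free graph $G$ on $n$ vertices that contains no induced matching of size $t+1$ satisfies \[ \mathrm{mis}(G) \le 2^t c^{\,n-2t}. \] That is, $\mathrm{mis}_{\triangle,t}(n) \le 2^t c^{n-2t}$.
   Context: All graphs are finite and simple. For a graph $G$, $\mathrm{mis}(G)$ denotes the number of maximal independent sets of $G$. An induced matching in $G$ is a set of pairwise vertex-disjoint edges of $G$ such that the subgraph induced by their endpoints consists of exactly these edges; its size is the number of edges. $\mathrm{mis}_{\triangle,t}(n)$ denotes the maximum of $\mathrm{mis}(G)$ over all $n$-vertex triangle-free graphs $G$ containing no induced matching of size $t+1$. *)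

From HB Require Import structures.
From mathcomp Require Import all_boot all_order all_algebra.
From mathcomp Require Import reals.
Set Implicit Arguments. Unset Strict Implicit. Unset Printing Implicit Defensive.

Definition simple_graph (T : finType) (e : rel T) :=
  symmetric e /\ irreflexive e.

Definition triangle_free (T : finType) (e : rel T) :=
  forall x y z : T, ~~ [&& e x y, e y z & e x z].

Definition independent (T : finType) (e : rel T) (S : {set T}) : bool :=
  [forall x in S, forall y in S, ~~ e x y].

Definition maximal_independent (T : finType) (e : rel T) (S : {set T}) : bool :=
  independent e S &&
  [forall S' : {set T}, (S \proper S') ==> ~~ independent e S'].

Definition mis (T : finType) (e : rel T) : nat :=
  #|[set S : {set T} | maximal_independent e S]|.

Definition induced_matching (T : finType) (e : rel T) (M : {set {set T}}) : bool :=
  [forall E in M, exists u, exists v, (E == [set u; v]) && e u v] &&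
  [forall E1 in M, forall E2 in M, (E1 != E2) ==> [disjoint E1 & E2]] &&
  [forall x in cover M, forall y in cover M, e x y ==> ([set x; y] \in M)].

Definition has_induced_matching_of_size (T : finType) (e : rel T) (k : nat) :=
  exists M : {set {set T}}, induced_matching e M && (#|M| == k).

From HB Require Import structures.
From mathcomp Require Import all_boot all_order all_algebra.
From mathcomp Require Import reals.
From mathcomp Require Import lra zify.
Import Order.TTheory GRing.Theory Num.Theory.
Set Implicit Arguments. Unset Strict Implicit. Unset Printing Implicit Defensive.

(* Let mis(A) count the maximal independent sets of the induced subgraph G[A]; we show
   mis(A) c^(2t) <= 2^t c^|A| by induction on |A| when G[A] has no induced matching of
   size t+1.  Deciding whether a chosen vertex enters the independent set splits mis(A)
   into counts for G[A] minus closed neighbourhoods.  If G[A] has a vertex of degree 0 or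
   at least 3, a leaf whose neighbour has degree 2, or is 2-regular (where triangle-freeness
   is used), the subproblems are smaller by (1), (4,1), (2,3) or (3,3,4) vertices, and
   each of these vectors satisfies sum_i c^(-d_i) <= 1 as soon as c >= 7/5.  Otherwise
   G[A] has an isolated edge uv: then mis(A) <= 2 mis(A - u - v), and since uv extends
   every induced matching of G[A - u - v] the parameter t drops by one, which pays for it
   because c^2 <= 2.  The largest root c of x^6 - 2x^2 - 2x - 1 lies in [7/5, sqrt 2]. *)

Section Graph.

Variables (T : finType) (e : rel T).
Hypotheses (e_sym : symmetric e) (e_irr : irreflexive e) (e_tri : triangle_free e).

(* Maximality inside G[A] is expressed as domination of A. *)
Definition max_indep_in (A S : {set T}) : bool :=
  [&& S \subset A, independent e S &
      [forall x in A, (x \in S) || [exists y in S, e x y]]].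

Definition mis_in (A : {set T}) : nat := #|[set S | max_indep_in A S]|.

Definition closed_nbhd (I : {set T}) : {set T} :=
  I :|: [set y | [exists x in I, e x y]].

Definition nbhd_in (A : {set T}) (x : T) : {set T} := [set y in A | e x y].

(* What is left of G[A] once the vertices of I are put into the independent set and
   those of X are excluded. *)
Definition branch_set (A I X : {set T}) : {set T} := A :\: closed_nbhd I :\: X.

Lemma independentP (S : {set T}) :
  reflect (forall x y, x \in S -> y \in S -> ~~ e x y) (independent e S).
Proof.
apply: (iffP forallP) => [h x y xS yS | h x].
  by move/forall_inP: (implyP (h x) xS) => /(_ y yS).
by apply/implyP => xS; apply/forall_inP => y yS; apply: h.
Qed.

Lemma max_indep_inP (A S : {set T}) :
  reflect [/\ S \subset A, (forall x y, x \in S -> y \in S -> ~~ e x y) &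
             forall x, x \in A -> x \notin S -> exists2 y, y \in S & e x y]
          (max_indep_in A S).
Proof.
apply: (iffP and3P) => [[sSA /independentP indS /forall_inP domS] | [sSA indS domS]].
  split=> // x xA xS; move: (domS x xA); rewrite (negbTE xS) /=.
  by case/exists_inP => y; exists y.
split=> //; first exact/independentP.
apply/forall_inP => x xA; case: (boolP (x \in S)) => //= xS.
by case: (domS x xA xS) => y yS exy; apply/exists_inP; exists y.
Qed.

Lemma mis_in_setT : mis e = mis_in setT.
Proof.
apply: eq_card => S; rewrite !inE.
apply/idP/max_indep_inP => [/andP[/independentP indS /forallP maxS] | [_ indS domS]].
  split=> // x _ xS; apply/exists_inP; apply: contraT => noNx; exfalso.
  have propS : S \proper x |: S.
    by apply/properP; split; [exact: subsetUr | exists x; rewrite ?setU11].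
  move/implyP: (maxS (x |: S)) => /(_ propS) /negP; apply.
  apply/independentP => a b /setU1P[-> | aS] /setU1P[-> | bS].
  - by rewrite e_irr.
  - by apply: contra noNx => exb; apply/exists_inP; exists b.
  - by rewrite e_sym; apply: contra noNx => exa; apply/exists_inP; exists a.
  - exact: indS.
apply/andP; split; first exact/independentP.
apply/forallP => S'; apply/implyP => /properP[sSS' [x xS' xS]].
apply/negP => /independentP indS'; have [y yS exy] := domS x (in_setT x) xS.
by move: (indS' x y xS' (subsetP sSS' y yS)); rewrite exy.
Qed.

Lemma mis_in_set0 : mis_in set0 = 1%N.
Proof.
rewrite /mis_in -(cards1 (set0 : {set T})); apply: eq_card => S; rewrite !inE.
apply/idP/eqP => [/max_indep_inP[sS0 _ _] | ->]; first by apply/eqP; rewrite -subset0.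
by apply/max_indep_inP; split=> [|x y|x]; rewrite ?sub0set ?inE.
Qed.

Lemma closed_nbhd1 v y : (y \in closed_nbhd [set v]) = (y == v) || e v y.
Proof.
rewrite !inE; congr (_ || _); apply/exists_inP/idP => [[x /set1P -> //] | evy].
by exists v; rewrite ?set11.
Qed.

Definition in_branch (S : {set T}) (b : {set T} * {set T}) : bool :=
  (b.1 \subset S) && [disjoint S & b.2].

(* Dropping the forced vertices [I] is injective and lands in G[branch_set A I X]:
   a vertex of [A] outside [N[I] \cup X] still has its dominator in [S :\: I]. *)
Lemma card_max_indep_branch (A I X : {set T}) :
  independent e I ->
  #|[set S | max_indep_in A S & in_branch S (I, X)]| <= mis_in (branch_set A I X).
Proof.
move=> /independentP indI; set B := [set S | _].
have injB : {in B &, injective (fun S => S :\: I)}.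
  move=> S1 S2; rewrite !inE => /and3P[_ IS1 _] /and3P[_ IS2 _] eqS.
  by rewrite -(setID S1 I) -(setID S2 I) eqS (setIidPr IS1) (setIidPr IS2).
rewrite -(card_in_imset injB); apply/subset_leq_card/subsetP => _ /imsetP[S + ->].
rewrite !inE => /and3P[/max_indep_inP[sSA indS domS] /subsetP IS dSX].
have notN x : x \in S -> x \notin I -> x \notin closed_nbhd I.
  move=> xS xI; rewrite !inE negb_or xI; apply/exists_inP => -[i iI eix].
  by move: (indS i x (IS i iI) xS); rewrite eix.
apply/max_indep_inP; split.
- apply/subsetP => x /setDP[xS xI].
  by rewrite /branch_set !in_setD (disjointFr dSX xS) notN ?(subsetP sSA).
- by move=> x y /setDP[xS _] /setDP[yS _]; apply: indS.
move=> x /setDP[/setDP[xA xN] xX] xSI.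
have xI : x \notin I by apply: contra xN => xI; rewrite inE xI.
have xS : x \notin S by apply: contra xSI => xS; apply/setDP.
have [y yS exy] := domS x xA xS; exists y => //; apply/setDP; split=> //.
apply: contra xN => yI; rewrite !inE; apply/orP; right.
by apply/exists_inP; exists y; rewrite // e_sym.
Qed.

Lemma mis_in_le_sum_branches (A : {set T}) (bs : seq ({set T} * {set T})) :
  all (fun b => independent e b.1) bs ->
  (forall S, max_indep_in A S -> has (in_branch S) bs) ->
  mis_in A <= \sum_(b <- bs) mis_in (branch_set A b.1 b.2).
Proof.
move=> indbs coverbs.
apply: (@leq_trans #|[set S | max_indep_in A S & has (in_branch S) bs]|).
  by apply/subset_leq_card/subsetP => S; rewrite !inE => misS; rewrite misS coverbs.
elim: bs indbs {coverbs} => [_ | b bs IH /andP[indb indbs]].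
  by rewrite big_nil leqn0 cards_eq0; apply/eqP/setP => S; rewrite !inE andbF.
rewrite big_cons.
have := leq_add (card_max_indep_branch A b.2 indb) (IH indbs).
apply: leq_trans (leq_trans _ (leq_card_setU _ _).1).
by apply/subset_leq_card/subsetP => S; rewrite !inE /= andb_orr.
Qed.

Lemma card_branch_set_le (A I X D : {set T}) :
  D \subset A -> D \subset closed_nbhd I :|: X ->
  #|branch_set A I X| + #|D| <= #|A|.
Proof.
move=> sDA sDN; rewrite -(cardsID D A) (setIidPr sDA) addnC leq_add2l.
apply/subset_leq_card/subsetP => x; rewrite /branch_set !in_setD => /and3P[xX xN xA].
rewrite xA andbT; apply: contra xN => xD.
by have := subsetP sDN x xD; rewrite in_setU (negbTE xX) orbF.
Qed.

Lemma nbhd_in1P (A : {set T}) u v :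
  nbhd_in A u = [set v] -> [/\ v \in A, e u v & forall y, y \in A -> e u y -> y = v].
Proof.
move=> Nu; have /setIdP[vA euv] : v \in nbhd_in A u by rewrite Nu set11.
by split=> // y yA euy; apply/set1P; rewrite -Nu inE yA.
Qed.

Lemma nbhd_in2P (A : {set T}) u v w :
  nbhd_in A u = [set v; w] ->
  [/\ v \in A, e u v, w \in A, e u w & forall y, y \in A -> e u y -> (y == v) || (y == w)].
Proof.
move=> Nu; have /setIdP[vA euv] : v \in nbhd_in A u by rewrite Nu set21.
have /setIdP[wA euw] : w \in nbhd_in A u by rewrite Nu set22.
by split=> // y yA euy; rewrite -in_set2 -Nu inE yA.
Qed.

Definition no_induced_matching_in (A : {set T}) (k : nat) : Prop :=
  forall M, induced_matching e M -> cover M \subset A -> #|M| != k.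

Lemma no_induced_matching_in_sub (A B : {set T}) k :
  B \subset A -> no_induced_matching_in A k -> no_induced_matching_in B k.
Proof. by move=> sBA noA M imM sMB; apply: noA => //; apply: subset_trans sBA. Qed.

Lemma induced_matchingP (M : {set {set T}}) :
  reflect [/\ forall E, E \in M -> exists u v, E = [set u; v] /\ e u v,
     forall E1 E2, E1 \in M -> E2 \in M -> E1 != E2 -> [disjoint E1 & E2] &
     forall x y, x \in cover M -> y \in cover M -> e x y -> [set x; y] \in M]
   (induced_matching e M).
Proof.
apply: (iffP andP) =>
  [[/andP[/forall_inP edgM /forall_inP disM] /forall_inP indM] | [edgM disM indM]].
  split.
  - by move=> E /edgM /existsP[u /existsP[v /andP[/eqP -> euv]]]; exists u, v.
  - by move=> E1 E2 /disM /forall_inP dE1 E2M; apply/implyP/dE1.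
  - by move=> x y /indM /forall_inP iMx yM; apply/implyP/iMx.
split; first (apply/andP; split).
- apply/forall_inP => E /edgM[u [v [-> euv]]].
  by apply/existsP; exists u; apply/existsP; exists v; rewrite eqxx.
- by apply/forall_inP => E1 E1M; apply/forall_inP => E2 E2M; apply/implyP/disM.
- by apply/forall_inP => x xM; apply/forall_inP => y yM; apply/implyP/indM.
Qed.

Lemma induced_matching0 : induced_matching e set0.
Proof. by apply/induced_matchingP; split=> [E|E1 E2|x y]; rewrite ?inE // /cover big_set0 inE. Qed.

Section IsolatedEdge.

Variables (A : {set T}) (u v : T).
Hypotheses (uA : u \in A) (Nu : nbhd_in A u = [set v]) (Nv : nbhd_in A v = [set u]).

Let uv := [set u; v].

Lemma induced_matching_setU1_isolated (M : {set {set T}}) :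
  induced_matching e M -> cover M \subset A :\: uv ->
  induced_matching e (uv |: M) /\ cover (uv |: M) \subset A.
Proof.
have [vA euv isou] := nbhd_in1P Nu; have [_ evu isov] := nbhd_in1P Nv.
case/induced_matchingP => edgM disM indM sMA.
have outM x : x \in cover M -> x \in A /\ x \notin uv.
  by move/(subsetP sMA)/setDP => -[].
have coverU x : (x \in cover (uv |: M)) = (x \in uv) || (x \in cover M).
  by rewrite /cover bigcup_setU big_set1 in_setU.
have edge_uv x y : x \in uv -> y \in uv -> e x y -> [set x; y] = uv.
  by case/set2P=> -> /set2P[] ->; rewrite ?e_irr // => _; rewrite setUC.
have uv_isolated x y : x \in uv -> y \in cover M -> ~~ e x y.
  move=> /set2P[] -> /outM[yA yuv]; apply: contra yuv => exy.
    by rewrite (isou y yA exy) set22.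
  by rewrite (isov y yA exy) set21.
have disjoint_uv E : E \in M -> [disjoint uv & E].
  move=> EM; apply/pred0P => x /=; apply/negP => /andP[xuv xE].
  have /outM[_] : x \in cover M by apply/bigcupP; exists E.
  by rewrite xuv.
split; last first.
  apply/subsetP => x; rewrite coverU => /orP[/set2P[] -> // | /outM[] //].
apply/induced_matchingP; split.
- by move=> E /setU1P[-> | /edgM //]; exists u, v.
- move=> E1 E2 /setU1P[-> | E1M] /setU1P[-> | E2M] neqE; last exact: disM.
  + by rewrite eqxx in neqE.
  + exact: disjoint_uv.
  + by rewrite disjoint_sym; apply: disjoint_uv.
move=> x y; rewrite !coverU => /orP[xuv | xM] /orP[yuv | yM] exy.
- by rewrite (edge_uv x y) ?setU11.
- by move: (uv_isolated x y xuv yM); rewrite exy.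
- by move: (uv_isolated y x yuv xM); rewrite e_sym exy.
- by rewrite setU1r ?indM.
Qed.

Lemma no_induced_matching_in_isolated_edge t :
  no_induced_matching_in A t.+1 ->
  exists2 t', t = t'.+1 & no_induced_matching_in (A :\: uv) t'.+1.
Proof.
move=> noA.
have extend M : induced_matching e M -> cover M \subset A :\: uv -> #|M| != t.
  move=> imM sMA; have [imM' sM'A] := induced_matching_setU1_isolated imM sMA.
  have uvM : uv \notin M.
    apply/negP => uvM; have /(subsetP sMA)/setDP[_] : u \in cover M.
      by apply/bigcupP; exists uv; rewrite ?set21.
    by rewrite set21.
  by have := noA _ imM' sM'A; rewrite cardsU1 uvM.
case: t noA extend => [|t'] _ extend.
  by have := extend _ induced_matching0; rewrite cards0 /cover big_set0 sub0set => /(_ isT).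
by exists t' => // M imM sMA; apply: extend.
Qed.

End IsolatedEdge.

Lemma independent0 : independent e set0.
Proof. by apply/independentP => x y; rewrite inE. Qed.

Lemma independent1 v : independent e [set v].
Proof. by apply/independentP => x y /set1P -> /set1P ->; rewrite e_irr. Qed.

Lemma card_branch_set1_le (A X : {set T}) v :
  v \in A -> X \subset A -> [disjoint X & v |: nbhd_in A v] ->
  #|branch_set A [set v] X| + #|nbhd_in A v|.+1 + #|X| <= #|A|.
Proof.
move=> vA sXA dX; set D := v |: nbhd_in A v.
have vN : v \notin nbhd_in A v by rewrite inE e_irr andbF.
have cardDX : #|D :|: X| = (#|nbhd_in A v|.+1 + #|X|)%N.
  by rewrite cardsU setIC (disjoint_setI0 dX) cards0 subn0 cardsU1 vN.
rewrite -addnA -cardDX.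
apply: card_branch_set_le; apply/subsetP => x /setUP[/setU1P[-> | /setIdP[xA exv]] | xX].
- by [].
- by [].
- exact: subsetP sXA x xX.
- by rewrite in_setU closed_nbhd1 eqxx.
- by rewrite in_setU closed_nbhd1 exv orbT.
- by rewrite in_setU xX orbT.
Qed.

Lemma card_branch_set1_set0_le (A : {set T}) v :
  v \in A -> #|branch_set A [set v] set0| + #|nbhd_in A v|.+1 <= #|A|.
Proof.
move=> vA; have := card_branch_set1_le vA (sub0set A).
by rewrite -setI_eq0 set0I eqxx cards0 addn0 => /(_ isT).
Qed.

Definition branching (A : {set T}) (bs : seq ({set T} * nat)) : Prop :=
  (forall b, b \in bs -> b.1 \subset A /\ #|b.1| + b.2 <= #|A|)
  /\ mis_in A <= \sum_(b <- bs) mis_in b.1.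

Lemma branching_rules (A : {set T}) (rs : seq ({set T} * {set T} * nat)) :
  all (fun r => independent e r.1.1) rs ->
  (forall S, max_indep_in A S -> has (fun r => in_branch S r.1) rs) ->
  all (fun r => #|branch_set A r.1.1 r.1.2| + r.2 <= #|A|) rs ->
  branching A [seq (branch_set A r.1.1 r.1.2, r.2) | r <- rs].
Proof.
move=> indrs coverrs /allP cardrs; split.
  move=> _ /mapP[r rrs ->]; split; last exact: cardrs.
  by apply/subsetP => x /setDP[/setDP[]].
rewrite big_map; apply: leq_trans (@mis_in_le_sum_branches A (map fst rs) _ _) _.
- by rewrite all_map.
- by move=> S /coverrs; rewrite has_map.
- by rewrite big_map.
Qed.

Lemma max_indep_in_nbhd (A S : {set T}) x :
  max_indep_in A S -> x \in A -> x \notin S -> exists2 y, y \in S & y \in nbhd_in A x.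
Proof.
case/max_indep_inP => sSA _ domS xA xS; have [y yS exy] := domS x xA xS.
by exists y; rewrite // inE (subsetP sSA) ?exy.
Qed.

Lemma in_branch1 (S X : {set T}) v : in_branch S ([set v], X) = (v \in S) && [disjoint S & X].
Proof. by rewrite /in_branch sub1set. Qed.

Lemma in_branch0 (S : {set T}) v : in_branch S (set0, [set v]) = (v \notin S).
Proof. by rewrite /in_branch sub0set disjoint_sym disjoints1. Qed.

Lemma branching_deg0 (A : {set T}) v :
  v \in A -> nbhd_in A v = set0 -> branching A [:: (branch_set A [set v] set0, 1%N)].
Proof.
move=> vA Nv0; apply: (@branching_rules A [:: ([set v], set0, 1%N)]) => /=.
- by rewrite independent1.
- move=> S misS; rewrite in_branch1 -setI_eq0 setI0 eqxx andbT orbF.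
  by apply: contraT => vS; have [y _] := max_indep_in_nbhd misS vA vS; rewrite Nv0 inE.
- by have := card_branch_set1_set0_le vA; rewrite Nv0 cards0 andbT.
Qed.

Lemma branching_deg3 (A : {set T}) v :
  v \in A -> 3 <= #|nbhd_in A v| ->
  branching A [:: (branch_set A [set v] set0, 4); (branch_set A set0 [set v], 1%N)].
Proof.
move=> vA deg3.
apply: (@branching_rules A [:: ([set v], set0, 4); (set0, [set v], 1%N)]) => /=.
- by rewrite independent1 independent0.
- by move=> S _; rewrite in_branch1 in_branch0 -setI_eq0 setI0 eqxx andbT orbF orbN.
- rewrite andbT; apply/andP; split.
    by apply: leq_trans (card_branch_set1_set0_le vA); rewrite leq_add2l.
  have := @card_branch_set_le A set0 [set v] [set v]; rewrite cards1; apply.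
    by rewrite sub1set.
  by rewrite sub1set in_setU set11 orbT.
Qed.

Lemma branch_set1_set0 (A : {set T}) v :
  branch_set A [set v] set0 = A :\: (v |: nbhd_in A v).
Proof.
apply/setP => x; rewrite /branch_set setD0 !in_setD closed_nbhd1 in_setU1 inE.
by case: (x \in A); rewrite ?andbF ?andbT.
Qed.

Lemma mis_in_isolated_edge (A : {set T}) u v :
  u \in A -> nbhd_in A u = [set v] -> nbhd_in A v = [set u] ->
  mis_in A <= (mis_in (A :\: [set u; v])).*2.
Proof.
move=> uA Nu Nv; have [vA _ _] := nbhd_in1P Nu.
have := @mis_in_le_sum_branches A [:: ([set u], set0); ([set v], set0)].
rewrite /= !independent1 !big_cons big_nil !branch_set1_set0 Nu Nv setUC addn0 addnn.
apply=> // S misS; rewrite !in_branch1 -setI_eq0 setI0 eqxx !andbT orbF.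
apply/orP; case: (boolP (u \in S)) => uS; [by left | right].
by have [y yS] := max_indep_in_nbhd misS uA uS; rewrite Nu => /set1P <-.
Qed.

Lemma branching_leaf (A : {set T}) u v w :
  u \in A -> nbhd_in A u = [set v] -> nbhd_in A v = [set u; w] -> w != u ->
  branching A [:: (branch_set A [set u] set0, 2); (branch_set A [set v] set0, 3)].
Proof.
move=> uA Nu Nv wu; have [vA _ _] := nbhd_in1P Nu.
apply: (@branching_rules A [:: ([set u], set0, 2); ([set v], set0, 3)]) => /=.
- by rewrite !independent1.
- move=> S misS; rewrite !in_branch1 -setI_eq0 setI0 eqxx !andbT orbF.
  apply/orP; case: (boolP (u \in S)) => uS; [by left | right].
  by have [y yS] := max_indep_in_nbhd misS uA uS; rewrite Nu => /set1P <-.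
- rewrite andbT; apply/andP; split.
    by have := card_branch_set1_set0_le uA; rewrite Nu cards1.
  by have := card_branch_set1_set0_le vA; rewrite Nv cards2 eq_sym wu.
Qed.

Lemma branching_cycle (A : {set T}) v a b a' b' :
  v \in A -> nbhd_in A v = [set a; b] -> a != b ->
  nbhd_in A a = [set v; a'] -> a' != v -> nbhd_in A b = [set v; b'] -> b' != v ->
  branching A [:: (branch_set A [set v] set0, 3); (branch_set A [set a] set0, 3);
                  (branch_set A [set b] [set a], 4)].
Proof.
move=> vA Nv ab Na a'v Nb b'v.
have [aA eva bA evb _] := nbhd_in2P Nv; have [_ ebv _ ebb' _] := nbhd_in2P Nb.
have av : a != v by apply: contraTneq eva => ->; rewrite e_irr.
have ab' : a != b'.
  apply: contraTneq ebb' => <-; rewrite e_sym.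
  by have := e_tri v a b; rewrite eva evb andbT.
apply: (@branching_rules A
  [:: ([set v], set0, 3); ([set a], set0, 3); ([set b], [set a], 4)]) => /=.
- by rewrite !independent1.
- move=> S misS; rewrite !in_branch1 -setI_eq0 setI0 eqxx !andbT orbF disjoint_sym disjoints1.
  case: (boolP (v \in S)) => //= vS; case: (boolP (a \in S)) => //= aS.
  have [y yS] := max_indep_in_nbhd misS vA vS.
  by rewrite andbT Nv => /set2P[] yE; [rewrite -yE yS in aS | rewrite -yE].
- rewrite andbT; apply/and3P; split.
  + by have := card_branch_set1_set0_le vA; rewrite Nv cards2 ab.
  + by have := card_branch_set1_set0_le aA; rewrite Na cards2 eq_sym a'v.
  + have := card_branch_set1_le bA (X := [set a]); rewrite sub1set aA disjoints1.
    rewrite Nb cards2 cards1 in_setU1 in_set2 (negbTE ab) (negbTE av) (negbTE ab').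
    by rewrite [v == b']eq_sym (negbTE b'v) /= => /(_ isT isT); rewrite -addnA.
Qed.

Lemma cards2_other (N : {set T}) v :
  #|N| == 2 -> v \in N -> exists2 w, w != v & N = [set v; w].
Proof.
case/cards2P => x [y [xy ->]] /set2P[] ->; first by exists y; rewrite // eq_sym.
by exists x; rewrite // setUC.
Qed.

(* The branching vectors of a vertex of degree 0, of degree >= 3, of a leaf attached to a
   vertex of degree 2, and of a 2-regular G[A]. *)
Definition branching_vectors : seq (seq nat) :=
  [:: [:: 1%N]; [:: 4; 1%N]; [:: 2; 3]; [:: 3; 3; 4]].

Lemma exists_branching (A : {set T}) : A != set0 ->
  (exists u v, [/\ u \in A, nbhd_in A u = [set v] & nbhd_in A v = [set u]])
  \/ exists2 bs, [seq b.2 | b <- bs] \in branching_vectors & branching A bs.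
Proof.
case/set0Pn => x xA.
case: (boolP [exists v in A, 2 < #|nbhd_in A v|]) => [/exists_inP[v vA deg3] | /exists_inPn le2].
  by right; eexists; last exact: branching_deg3 vA deg3.
case: (boolP [exists v in A, #|nbhd_in A v| == 0]) => [/exists_inP[v vA] | /exists_inPn ge1].
  by move/eqP/cards0_eq => Nv0; right; eexists; last exact: branching_deg0 vA Nv0.
have deg12 v : v \in A -> (#|nbhd_in A v| == 1) || (#|nbhd_in A v| == 2).
  by move=> vA; have := le2 v vA; have := ge1 v vA; case: #|_| => [|[|[|]]].
case: (boolP [exists u in A, #|nbhd_in A u| == 1]) =>
  [/exists_inP[u uA /cards1P[v Nu]] | /exists_inPn no1].
  have [vA euv _] := nbhd_in1P Nu.
  have uNv : u \in nbhd_in A v by rewrite inE uA e_sym.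
  case/orP: (deg12 v vA) => [/cards1P[u' Nv] | /cards2_other/(_ uNv)[w wu Nv]].
    by left; exists u, v; move: uNv; rewrite Nv => /set1P <-.
  by right; eexists; last exact: branching_leaf uA Nu Nv wu.
have deg2 v : v \in A -> #|nbhd_in A v| == 2.
  by move=> vA; have := deg12 v vA; rewrite (negbTE (no1 v vA)).
have /cards2P[a [b [ab Nx]]] := deg2 x xA.
have [aA exa bA exb _] := nbhd_in2P Nx.
have [a' a'x Na] : exists2 a', a' != x & nbhd_in A a = [set x; a'].
  by apply: cards2_other; rewrite ?deg2 // inE xA e_sym.
have [b' b'x Nb] : exists2 b', b' != x & nbhd_in A b = [set x; b'].
  by apply: cards2_other; rewrite ?deg2 // inE xA e_sym.
by right; eexists; last exact: branching_cycle xA Nx ab Na a'x Nb b'x.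
Qed.

End Graph.

Local Open Scope ring_scope.

Section Weights.

Variables (R : realFieldType) (c : R).

Lemma inv_exprn_le d : 7 / 5 <= c -> (c ^+ d)^-1 <= (5 / 7) ^+ d.
Proof.
move=> c_ge; have c0 : 0 < c by lra.
rewrite -exprVn; apply: lerXn2r; rewrite ?nnegrE ?invr_ge0; try lra.
by rewrite -div1r ler_pdivrMr //; lra.
Qed.

Lemma sum_inv_branching_vector ds : 7 / 5 <= c ->
  ds \in branching_vectors -> \sum_(d <- ds) (c ^+ d)^-1 <= 1.
Proof.
move=> c_ge; have le d := inv_exprn_le d c_ge.
rewrite !inE => /or4P[] /eqP ->; rewrite !big_cons big_nil addr0.
- by apply: le_trans (le 1%N) _; lra.
- by apply: le_trans (lerD (le 4%N) (le 1%N)) _; lra.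
- by apply: le_trans (lerD (le 2%N) (le 3%N)) _; lra.
- by apply: le_trans (lerD (le 3%N) (lerD (le 3%N) (le 4%N))) _; lra.
Qed.

Lemma bound_step_double (x y t a : nat) : 0 <= c -> (x <= y.*2)%N ->
  y%:R * c ^+ (2 * t) <= 2 ^+ t * c ^+ a ->
  x%:R * c ^+ (2 * t.+1) <= 2 ^+ t.+1 * c ^+ (a + 2).
Proof.
move=> c0 xy IHy; have Q0 : 0 <= c ^+ 2 by rewrite exprn_ge0.
have K0 : 0 <= c ^+ (2 * t) by rewrite exprn_ge0.
have x2y : x%:R <= 2 * y%:R :> R by rewrite -natrM mul2n ler_nat.
rewrite mulnS exprD [c ^+ (a + 2)]exprD [2 ^+ _.+1]exprS.
apply: (@le_trans _ _ (2 * (y%:R * c ^+ (2 * t)) * c ^+ 2)).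
  rewrite [c ^+ 2 * _]mulrC (mulrA _ (c ^+ (2 * t))).
  by apply: ler_wpM2r => //; rewrite mulrA; apply: ler_wpM2r.
rewrite -[2 * _ * c ^+ 2]mulrA -[2 * 2 ^+ t * _]mulrA; apply: ler_wpM2l => //.
by rewrite (mulrA (2 ^+ t)); apply: ler_wpM2r.
Qed.

Lemma bound_step_branches (x t n : nat) (ps : seq (nat * nat)) :
  0 < c -> (x <= \sum_(p <- ps) p.1)%N -> all (fun p => p.2 <= n)%N ps ->
  (forall p, p \in ps -> p.1%:R * c ^+ (2 * t) <= 2 ^+ t * c ^+ (n - p.2)%N) ->
  \sum_(p <- ps) (c ^+ p.2)^-1 <= 1 ->
  x%:R * c ^+ (2 * t) <= 2 ^+ t * c ^+ n.
Proof.
move=> c0 x_le /allP ps_n IHps weight_le1.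
have K0 : 0 <= c ^+ (2 * t) by rewrite exprn_ge0 // ltW.
apply: (@le_trans _ _ ((\sum_(p <- ps) p.1)%:R * c ^+ (2 * t))).
  by apply: ler_wpM2r; rewrite ?ler_nat.
rewrite natr_sum mulr_suml.
apply: (@le_trans _ _ (\sum_(p <- ps) 2 ^+ t * c ^+ (n - p.2)%N)).
  by rewrite !big_seq; apply: ler_sum => p; apply: IHps.
rewrite -mulr_sumr ler_wpM2l ?exprn_ge0 //.
rewrite (eq_big_seq (fun p => c ^+ n * (c ^+ p.2)^-1)); last first.
  by move=> p /ps_n pn; rewrite expfB_cond // gt_eqF.
by rewrite -mulr_sumr -[leRHS]mulr1 ler_wpM2l // exprn_ge0 // ltW.
Qed.

End Weights.

Lemma mis_in_bound (R : realFieldType) (c : R) (T : finType) (e : rel T) :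
  7 / 5 <= c -> c ^+ 2 <= 2 -> symmetric e -> irreflexive e -> triangle_free e ->
  forall (A : {set T}) t, no_induced_matching_in e A t.+1 ->
  (mis_in e A)%:R * c ^+ (2 * t) <= 2 ^+ t * c ^+ #|A|.
Proof.
move=> c_ge c2_le e_sym e_irr e_tri A t; have c0 : 0 < c by lra.
have c_ge1 : 1 <= c by lra.
have [m] := ubnP #|A|; elim: m => // m IH in A t *; rewrite ltnS => leAm noA.
have [-> | A0] := eqVneq A set0.
  rewrite mis_in_set0 cards0 mul1r expr0 mulr1 exprM.
  by apply: lerXn2r => //; rewrite nnegrE ?ler0n // exprn_ge0 // ltW.
case: (exists_branching e_sym e_irr e_tri A0) => [[u [v [uA Nu Nv]]] | [bs vec [sub_bs mis_bs]]].
  have [t' -> noA'] := no_induced_matching_in_isolated_edge e_sym e_irr uA Nu Nv noA.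
  have [vA euv _] := nbhd_in1P Nu.
  have uv : u != v by apply: contraTneq euv => ->; rewrite e_irr.
  have cardA : #|A| = (#|A :\: [set u; v]| + 2)%N.
    have sA : [set u; v] \subset A by rewrite subUset !sub1set uA vA.
    rewrite cardsDS // cards2 uv; have := subset_leq_card sA; rewrite cards2 uv; lia.
  rewrite cardA; apply: (bound_step_double (ltW c0) (mis_in_isolated_edge e_sym e_irr uA Nu Nv)).
  by apply: IH noA'; lia.
have d_pos : all (leq 1) [seq b.2 | b <- bs] by move: vec; rewrite !inE => /or4P[] /eqP ->.
apply: (@bound_step_branches _ _ _ _ _ [seq (mis_in e b.1, b.2) | b <- bs]) => //.
- by rewrite big_map.
- by apply/allP => _ /mapP[b bbs ->]; have [_ /(leq_trans (leq_addl _ _))] := sub_bs b bbs.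
- move=> _ /mapP[b bbs ->]; have [sA cardb] := sub_bs b bbs.
  have db : (0 < b.2)%N := allP d_pos _ (map_f snd bbs).
  apply: le_trans (IH b.1 t _ (no_induced_matching_in_sub sA noA)) _; first lia.
  rewrite ler_wpM2l ?exprn_ge0 //; apply: ler_weXn2l => //.
  by rewrite leq_subRL; [rewrite addnC | exact: leq_trans (leq_addl _ _) cardb].
- by rewrite big_map -(big_map snd xpredT (fun d => (c ^+ d)^-1)) sum_inv_branching_vector.
Qed.

Lemma root_ge_7_5 (R : realType) (c : R) :
  (forall x : R, x ^+ 6 - 2 * x ^+ 2 - 2 * x - 1 = 0 -> x <= c) -> 7 / 5 <= c.
Proof.
move=> c_max; pose p : {poly R} := 'X^6 - 2%:P * 'X^2 - 2%:P * 'X - 1.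
have pE x : p.[x] = x ^+ 6 - 2 * x ^+ 2 - 2 * x - 1 by rewrite !hornerE.
have [x /andP[x_ge _] /rootP px0] : exists2 x, 7 / 5 <= x <= 141 / 100 & root p x.
  by apply: poly_ivt; rewrite ?pE; [lra | apply/andP; split; lra].
by apply: le_trans x_ge (c_max x _); rewrite -pE.
Qed.

Lemma root_sqr_le2 (R : realFieldType) (c : R) :
  7 / 5 <= c -> c ^+ 6 - 2 * c ^+ 2 - 2 * c - 1 = 0 -> c ^+ 2 <= 2.
Proof.
move=> c_ge c_root; rewrite leNgt; apply/negP => c2_gt.
have : 0 < c ^+ 6 - 2 * c ^+ 2 - 2 * c - 1; last by rewrite c_root ltxx.
rewrite (_ : 6 = 2 * 3)%N // exprM; set y := c ^+ 2 in c2_gt *.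
have cc : c * c = y by rewrite /y expr2.
nra.
Qed.

Theorem mainTheorem2 (R : realType) (c : R)
  (hc_root : c ^+ 6 - 2 * c ^+ 2 - 2 * c - 1 = 0)
  (hc_max : forall x : R, x ^+ 6 - 2 * x ^+ 2 - 2 * x - 1 = 0 -> x <= c)
  (n t : nat) (hn : (1 <= n)%N) (ht : (2 * t <= n)%N)
  (e : rel 'I_n) (hG : simple_graph e) (htri : triangle_free e)
  (hmatch : ~ has_induced_matching_of_size e t.+1) :
  (mis e)%:R <= 2 ^+ t * c ^+ (n - 2 * t).
Proof.
have c_ge := root_ge_7_5 hc_max.
have c2_le := root_sqr_le2 c_ge hc_root.
have [e_sym e_irr] := hG.
have noG : no_induced_matching_in e setT t.+1.
  by move=> M imM _; apply/negP => /eqP cardM; apply: hmatch; exists M; rewrite imM cardM eqxx.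
have := mis_in_bound c_ge c2_le e_sym e_irr htri noG.
rewrite -mis_in_setT // cardsT card_ord.
have -> : c ^+ n = c ^+ (n - 2 * t) * c ^+ (2 * t) by rewrite -exprD subnK.
by rewrite mulrA ler_pM2r // exprn_gt0 //; lra.
Qed.
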